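(* Let $z^0\in X$, $\gamma\in(0,2)$, $\delta\in[0,1/2)$, and let $\{\sigma_k\},\{\eta_k\}$ be nonnegative with $\sum_k\eta_k<\infty$, $\inf_k\sigma_k>0$; let $z^{k+1}$ be an output of IGPPAstep$(z^k,\sigma_k,\eta_k,\delta,\gamma,M)$ for all $k\ge0$. Assume $T$ satisfies the bounded metric subregularity condition, let $\bar z^0$ be a point of $\Omega$ nearest to $z^0$ in $\|\cdot\|_M$, let $r\ge\|\bar z^0\|+\frac{1}{\lambda_{\min}(M)}(\operatorname{dist}_M(z^0,\Omega)+\gamma\sum_k\eta_k)$ and $\kappa_r>0$ with $\operatorname{dist}(z,\Omega)\le\kappa_r\operatorname{dist}(0,T(z))$ for $\|z\|\le r$. Let $\alpha>0$ be such that $\rho:=\frac{1}{1-\delta}\Big(\sqrt{1-\frac{\min\{\gamma,2\gamma-\gamma^2\}\alpha^2}{\alpha^2+1}}+\delta\big(\frac{\min\{\gamma,1\}}{\sqrt{\alpha^2+1}}+1\big)\Big)<1.$ If $\sigma_k\ge\kappa_r\alpha$ for all $k\ge0$, then $\operatorname{dist}_M(z^k,\Omega)\le\rho^k\operatorname{dist}_M(z^0,\Omega)$ for all $k\ge0$.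
   Context: $X$ is a finite-dimensional real Hilbert space; $T:X\rightrightarrows X$ is maximal monotone with $\Omega:=T^{-1}(0)\neq\emptyset$. $M$ is self-adjoint positive definite with $\lambda_{\max}(M)=1$; $\|z\|_M=\sqrt{\langle z,Mz\rangle}$, $\operatorname{dist}_M(z,D)=\min_{d\in D}\|d-z\|_M$, $\operatorname{dist}=\operatorname{dist}_I$. $\mathcal{J}_{\sigma M^{-1}T}:=(I+\sigma M^{-1}T)^{-1}$. $z^+$ is an output of IGPPAstep$(z,\sigma,\eta,\delta,\gamma,M)$ if $z^+=\gamma w+(1-\gamma)z$ for some $w$ with $\|w-\mathcal{J}_{\sigma M^{-1}T}(z)\|_M\le\min\{\eta,\delta\|w-z\|_M\}$. Bounded metric subregularity: for every $r>0$ there is $\kappa_r>0$ with $\operatorname{dist}(z,\Omega)\le\kappa_r\operatorname{dist}(0,T(z))$ for all $\|z\|\le r$. *)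

(* R : realType, X = 'cV[R]_n with the standard inner product. *)
From HB Require Import structures.
From mathcomp Require Import all_boot all_order all_algebra.
From mathcomp Require Import all_classical all_reals.
From mathcomp Require Import topology normedtype sequences.

Set Implicit Arguments.
Unset Strict Implicit.
Unset Printing Implicit Defensive.

Import Order.TTheory GRing.Theory Num.Theory numFieldNormedType.Exports.
Local Open Scope ring_scope.
Local Open Scope classical_set_scope.

Section Defs.
Variables (R : realType) (n : nat).
Local Notation vec := 'cV[R]_n.

Definition inner (x y : vec) : R := (x^T *m y) 0 0.

Definition enorm (z : vec) : R := Num.sqrt (inner z z).

Definition normM (M : 'M[R]_n) (z : vec) : R := Num.sqrt (inner z (M *m z)).

(* dist_M(z, D) = min_{d in D} ||d - z||_M (the minimum exists for the
   closed nonempty sets used here, so it equals the infimum) *)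
Definition distM (M : 'M[R]_n) (z : vec) (D : set vec) : R :=
  inf [set normM M (d - z) | d in D].

Definition dist (z : vec) (D : set vec) : R :=
  inf [set enorm (d - z) | d in D].

(* set-valued operators T : X ⇉ X, given by their graph: T x u <-> u ∈ T(x) *)
Definition monotone_op (T : vec -> vec -> Prop) : Prop :=
  forall x y u v, T x u -> T y v -> 0 <= inner (x - y) (u - v).

Definition maximal_monotone (T : vec -> vec -> Prop) : Prop :=
  monotone_op T /\
  forall S : vec -> vec -> Prop, monotone_op S ->
    (forall x u, T x u -> S x u) -> forall x u, S x u -> T x u.

Definition zeros (T : vec -> vec -> Prop) : set vec := [set z | T z 0].

Definition self_adjoint (M : 'M[R]_n) : Prop := M^T = M.

Definition pos_def (M : 'M[R]_n) : Prop :=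
  forall x : vec, x != 0 -> 0 < inner x (M *m x).

Definition is_lambda_min (M : 'M[R]_n) (l : R) : Prop :=
  eigenvalue M l /\ forall a, eigenvalue M a -> l <= a.
Definition is_lambda_max (M : 'M[R]_n) (l : R) : Prop :=
  eigenvalue M l /\ forall a, eigenvalue M a -> a <= l.

(* p = J_{sigma M^{-1} T}(z) = (I + sigma M^{-1} T)^{-1}(z), i.e.
   z ∈ p + sigma M^{-1} T(p).  (Single-valued and everywhere defined
   for maximal monotone T, sigma > 0, M positive definite.) *)
Definition resolvent_pt (T : vec -> vec -> Prop) (M : 'M[R]_n) (sigma : R)
    (z p : vec) : Prop :=
  exists u, T p u /\ z = p + sigma *: (invmx M *m u).

Definition IGPPAstep_out (T : vec -> vec -> Prop) (z : vec) (sigma eta delta gamma : R)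
    (M : 'M[R]_n) (zplus : vec) : Prop :=
  exists w p, resolvent_pt T M sigma z p /\
    normM M (w - p) <= Num.min eta (delta * normM M (w - z)) /\
    zplus = gamma *: w + (1 - gamma) *: z.

(* dist(z, Omega) <= kappa * dist(0, T z) for all ||z|| <= r;
   written out: dist(0,T z) = inf_{u ∈ T z} ||u|| (= +oo if T z = ∅) *)
Definition subregular_on (T : vec -> vec -> Prop) (r kappa : R) : Prop :=
  forall z, enorm z <= r -> forall u, T z u -> dist z (zeros T) <= kappa * enorm u.

Definition bounded_metric_subregular (T : vec -> vec -> Prop) : Prop :=
  forall r, 0 < r -> exists kappa, 0 < kappa /\ subregular_on T r kappa.

End Defs.

Definition rate {R : realType} (gamma delta alpha : R) : R :=
  (1 / (1 - delta)) *
  (Num.sqrt (1 - (Num.min gamma (2 * gamma - gamma ^+ 2)) * alpha ^+ 2 / (alpha ^+ 2 + 1))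
   + delta * (Num.min gamma 1 / Num.sqrt (alpha ^+ 2 + 1) + 1)).

(* Write p for the resolvent point of an iterate z, so that M (z - p) = sigma u with
   u in T p, and measure everything in the M-norm.  Monotonicity of T gives
   <z - p, p - y>_M >= 0 for every zero y, hence |z - p|^2 + dist(p)^2 <= dist(z)^2.
   Subregularity at p, together with |M v| <= |v|_M and sigma >= kappa alpha, gives
   alpha dist(p) <= |z - p|, so that dist(p)^2 <= dist(z)^2 / (1 + alpha^2).  For
   gamma <= 1 the exact relaxed point gamma p + (1 - gamma) z is then controlled by the
   convexity of Omega, for gamma > 1 by the monotonicity inequality once more; in both
   cases dist(gamma p + (1 - gamma) z)^2 <= (1 - min(gamma, 2 gamma - gamma^2)
   alpha^2 / (1 + alpha^2)) dist(z)^2.  The inexact step moves this point by at most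
   gamma delta / (1 - delta) |z - p| <= gamma delta / (1 - delta) dist(z), and the sum
   of the two factors is at most rho.  Subregularity may be used at every p because the
   iterates are quasi-Fejer with respect to zbar0 with summable errors gamma eta_k,
   which keeps every p in the ball of radius r. *)

From HB Require Import structures.
From mathcomp Require Import all_boot all_order all_algebra.
From mathcomp Require Import all_classical all_reals.
From mathcomp Require Import topology normedtype sequences.
From mathcomp Require Import spectral sesquilinear.
From mathcomp.real_closed Require Import complex.
From mathcomp Require Import ring lra.

Set Implicit Arguments.
Unset Strict Implicit.
Unset Printing Implicit Defensive.

Import Order.TTheory GRing.Theory Num.Theory numFieldNormedType.Exports.
Local Open Scope ring_scope.
Local Open Scope classical_set_scope.
Local Open Scope sesquilinear_scope.

Section InnerProduct.
Variables (R : realType) (n : nat).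
Local Notation vec := 'cV[R]_n.

Lemma innerE (x y : vec) : inner x y = \sum_i x i 0 * y i 0.
Proof. by rewrite /inner mxE; apply: eq_bigr => i _; rewrite mxE. Qed.

Lemma innerC (x y : vec) : inner x y = inner y x.
Proof. by rewrite !innerE; apply: eq_bigr => i _; rewrite mulrC. Qed.

Lemma innerDr (x y z : vec) : inner x (y + z) = inner x y + inner x z.
Proof. by rewrite /inner mulmxDr mxE. Qed.

Lemma innerZr a (x y : vec) : inner x (a *: y) = a * inner x y.
Proof. by rewrite /inner -scalemxAr mxE. Qed.

Lemma innerBr (x y z : vec) : inner x (y - z) = inner x y - inner x z.
Proof. by rewrite innerDr -scaleN1r innerZr mulN1r. Qed.

Lemma innerDl (x y z : vec) : inner (x + y) z = inner x z + inner y z.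
Proof. by rewrite innerC innerDr !(innerC z). Qed.

Lemma innerZl a (x y : vec) : inner (a *: x) y = a * inner x y.
Proof. by rewrite innerC innerZr innerC. Qed.

Lemma innerNN (x y : vec) : inner (- x) (- y) = inner x y.
Proof. by rewrite -(scaleN1r x) -(scaleN1r y) innerZl innerZr !mulN1r opprK. Qed.

Lemma inner_ge0 (x : vec) : 0 <= inner x x.
Proof. by rewrite innerE; apply: sumr_ge0 => i _; rewrite -expr2 sqr_ge0. Qed.

Lemma inner_gt0 (x : vec) : x != 0 -> 0 < inner x x.
Proof.
move=> x0; rewrite lt_def inner_ge0 andbT; apply: contra x0.
rewrite innerE psumr_eq0 => [/allP x2_0|i _]; last by rewrite -expr2 sqr_ge0.
apply/eqP/matrixP => i j; rewrite (ord1 j) mxE.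
by have /implyP/(_ isT) := x2_0 i (mem_index_enum i); rewrite -expr2 sqrf_eq0 => /eqP.
Qed.

Lemma inner_mulmxr (A : 'M[R]_n) (x y : vec) : inner x (A *m y) = inner (A^T *m x) y.
Proof. by rewrite /inner trmx_mul trmxK mulmxA. Qed.

End InnerProduct.

Definition innerM (R : realType) n (M : 'M[R]_n) (x y : 'cV[R]_n) : R := inner x (M *m y).

Section MNorm.
Variables (R : realType) (n : nat) (M : 'M[R]_n).
Hypotheses (Msym : self_adjoint M) (Mpd : pos_def M).
Local Notation vec := 'cV[R]_n.
Local Notation "'[ x , y ]" := (innerM M x y).

Lemma innerMC x y : '[x, y] = '[y, x].
Proof. by rewrite /innerM inner_mulmxr Msym innerC. Qed.

Lemma innerMDr x y z : '[x, y + z] = '[x, y] + '[x, z].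
Proof. by rewrite /innerM mulmxDr innerDr. Qed.

Lemma innerMZr a x y : '[x, a *: y] = a * '[x, y].
Proof. by rewrite /innerM -scalemxAr innerZr. Qed.

Lemma innerMBr x y z : '[x, y - z] = '[x, y] - '[x, z].
Proof. by rewrite /innerM mulmxBr innerBr. Qed.

Lemma innerMDl x y z : '[x + y, z] = '[x, z] + '[y, z].
Proof. by rewrite innerMC innerMDr !(innerMC z). Qed.

Lemma innerMZl a x y : '[a *: x, y] = a * '[x, y].
Proof. by rewrite innerMC innerMZr innerMC. Qed.

Lemma innerMBl x y z : '[x - y, z] = '[x, z] - '[y, z].
Proof. by rewrite innerMC innerMBr !(innerMC z). Qed.

Lemma innerMxx_ge0 x : 0 <= '[x, x].
Proof.
have [->|x0] := eqVneq x 0; last exact/ltW/Mpd.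
by rewrite /innerM mulmx0 /inner mulmx0 mxE.
Qed.

Lemma normM_ge0 x : 0 <= normM M x.
Proof. exact: sqrtr_ge0. Qed.

Lemma normM_sqr x : normM M x ^+ 2 = '[x, x].
Proof. by rewrite sqr_sqrtr // innerMxx_ge0. Qed.

Lemma normM_le_sqr x y : (normM M x <= normM M y) = (normM M x ^+ 2 <= normM M y ^+ 2).
Proof. by rewrite ler_pXn2r // nnegrE normM_ge0. Qed.

Lemma normM_sqrD x y : normM M (x + y) ^+ 2 = normM M x ^+ 2 + 2 * '[x, y] + normM M y ^+ 2.
Proof. rewrite !normM_sqr innerMDl !innerMDr (innerMC y x); ring. Qed.

Lemma normMZ a x : normM M (a *: x) = `|a| * normM M x.
Proof.
by rewrite /normM -!/(innerM M _ _) innerMZl innerMZr mulrA -expr2 sqrtrM ?sqr_ge0 // sqrtr_sqr.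
Qed.

Lemma normMN x : normM M (- x) = normM M x.
Proof. by rewrite -scaleN1r normMZ normrN1 mul1r. Qed.

Lemma normMB x y : normM M (x - y) = normM M (y - x).
Proof. by rewrite -normMN opprB. Qed.

Lemma innerM_le_normM x y : '[x, y] <= normM M x * normM M y.
Proof.
have [->|y0] := eqVneq y 0.
  by rewrite -(scale0r (0 : vec)) innerMZr normMZ normr0 !mul0r mulr0.
have yy : 0 < '[y, y] by apply: Mpd.
have cauchy_schwarz : '[x, y] ^+ 2 <= '[x, x] * '[y, y].
  have := innerMxx_ge0 ('[y, y] *: x - '[x, y] *: y).
  rewrite !(innerMBl, innerMBr, innerMZl, innerMZr) (innerMC y x) => h.
  have : 0 <= '[y, y] * ('[x, x] * '[y, y] - '[x, y] ^+ 2) by nra.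
  by rewrite pmulr_rge0 // subr_ge0.
have [xy_le0|xy_gt0] := lerP '[x, y] 0.
  by apply: le_trans xy_le0 _; rewrite mulr_ge0 ?normM_ge0.
have : '[x, y] ^+ 2 <= (normM M x * normM M y) ^+ 2 by rewrite exprMn !normM_sqr.
by rewrite ler_pXn2r // nnegrE ?mulr_ge0 ?normM_ge0 // ltW.
Qed.

Lemma normM_triangle x y : normM M (x + y) <= normM M x + normM M y.
Proof.
rewrite -(ler_pXn2r (_ : (0 < 2)%N)) ?nnegrE ?addr_ge0 ?normM_ge0 //.
have := innerM_le_normM x y; rewrite normM_sqrD sqrrD; lra.
Qed.

Lemma normM_sqr_convex g x y : 0 <= g <= 1 ->
  normM M ((1 - g) *: x + g *: y) ^+ 2 <= (1 - g) * normM M x ^+ 2 + g * normM M y ^+ 2.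
Proof.
move=> /andP[g0 g1]; have := innerMxx_ge0 (x - y).
rewrite !normM_sqr !(innerMBl, innerMBr, innerMDl, innerMDr, innerMZl, innerMZr) (innerMC y x).
have : 0 <= g * (1 - g) by rewrite mulr_ge0 // subr_ge0.
nra.
Qed.

End MNorm.

Lemma spectral_diag_eigenvalue (C : numClosedFieldType) n (A : 'M[C]_n) j :
  A \is normalmx -> eigenvalue A (spectral_diag A 0 j).
Proof.
move=> An; have := orthomx_spectralP An.
set P := spectralmx A; set d := spectral_diag A => AE.
have Pu : P \is unitarymx := spectral_unitarymx A.
apply/eigenvalueP; exists (row j P).
  rewrite {1}AE invmx_unitary // -row_mul !mulmxA (unitarymxP Pu) mul1mx.
  by rewrite row_mul row_diag_mx -scalemxAl -rowE.
apply/eqP => Pj0; have /row_unitarymxP/(_ j j) := Pu.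
by rewrite Pj0 eqxx linear0l => /eqP; rewrite eq_sym oner_eq0.
Qed.

Lemma symmetric_psd (R : realType) n (A : 'M[R]_n) :
  A^T = A -> (forall a, eigenvalue A a -> 0 <= a) -> forall x, 0 <= inner x (A *m x).
Proof.
move=> Asym A_ge0 x.
(* Diagonalise the complexification of [A] by a unitary matrix; its diagonal entries are
   real eigenvalues of [A], hence nonnegative. *)
pose AC := map_mx (real_complex R) A.
have ACreal : AC \is a realmx.
  by apply/mxOverP => i j; rewrite mxE; apply/complex_realP; eexists.
have ACsym : AC \is symmetricmx.
  by apply/is_hermitianmxP; rewrite expr0 scale1r map_mx_id // /AC map_trmx Asym.
have ACh : AC \is hermsymmx by apply: realsym_hermsym.
have := orthomx_spectralP (hermitian_normalmx ACh).
set P := spectralmx AC; set d := spectral_diag AC => ACE.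
have d_ge0 j : 0 <= d 0 j.
  have /mxOverP/(_ 0 j)/complex_realP[c dE] := hermitian_spectral_diag_real ACh.
  rewrite dE ler0c; apply: A_ge0.
  rewrite eigenvalue_root_char -(fmorph_root (real_complex R)) map_char_poly.
  suff : root (char_poly AC) (d 0 j) by rewrite dE.
  by rewrite -eigenvalue_root_char; exact/spectral_diag_eigenvalue/hermitian_normalmx.
have Pu : P \is unitarymx := spectral_unitarymx AC.
rewrite /inner mulmxA -ler0c.
suff : 0 <= (map_mx (real_complex R) (x^T *m A *m x)) 0 0 by rewrite mxE.
rewrite !map_mxM -map_trmx -/AC.
set v := (map_mx (real_complex R) x)^T.
have -> : map_mx (real_complex R) x = v^t*.
  by apply/matrixP => i j; rewrite !mxE /=; apply/esym/CrealP/complex_realP; eexists.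
rewrite {1}ACE invmx_unitary //.
set y := v *m P^t*.
have -> : v *m (P^t* *m diag_mx d *m P) *m v^t* = y *m diag_mx d *m y^t*.
  by rewrite /y -!mulmxA trmx_mul map_mxM trmxCK.
rewrite mxE; apply: sumr_ge0 => k _.
by rewrite mul_mx_diag !mxE mulrAC mulr_ge0 // mul_conjC_ge0.
Qed.

Lemma enormE (R : realType) n (x : 'cV[R]_n) : enorm x = normM 1%:M x.
Proof. by rewrite /enorm /normM mul1mx. Qed.

Lemma self_adjoint1 (R : realType) n : self_adjoint (1%:M : 'M[R]_n).
Proof. exact: trmx1. Qed.

Lemma pos_def1 (R : realType) n : pos_def (1%:M : 'M[R]_n).
Proof. by move=> x x0; rewrite mul1mx inner_gt0. Qed.

Lemma enorm_ge0 (R : realType) n (x : 'cV[R]_n) : 0 <= enorm x.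
Proof. exact: sqrtr_ge0. Qed.

Lemma enorm_triangle (R : realType) n (x y : 'cV[R]_n) : enorm (x + y) <= enorm x + enorm y.
Proof. by rewrite !enormE; apply/normM_triangle/pos_def1/self_adjoint1. Qed.

Lemma enormZ (R : realType) n a (x : 'cV[R]_n) : enorm (a *: x) = `|a| * enorm x.
Proof. by rewrite !enormE (normMZ (@self_adjoint1 R n)). Qed.

Section Spectrum.
Variables (R : realType) (n : nat) (M : 'M[R]_n) (lmin : R).
Hypotheses (Msym : self_adjoint M) (Mpd : pos_def M).
Hypotheses (Mmax : is_lambda_max M 1) (Mmin : is_lambda_min M lmin).
Local Notation vec := 'cV[R]_n.

Lemma innerM_le_inner (x : vec) : innerM M x x <= inner x x.
Proof.
have IMsym : (1%:M - M)^T = 1%:M - M by rewrite linearB /= trmx1 Msym.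
have := symmetric_psd IMsym _ x; rewrite mulmxBl mul1mx innerBr subr_ge0; apply.
move=> a /eigenvalueP[v va v0]; rewrite -(gerBl 1).
apply/(proj2 Mmax)/eigenvalueP; exists v => //.
by rewrite scalerBl scale1r -va mulmxBr mulmx1 opprB addrC subrK.
Qed.

Lemma lambda_min_le_innerM (x : vec) : lmin * inner x x <= innerM M x x.
Proof.
have Mlsym : (M - lmin%:M)^T = M - lmin%:M by rewrite linearB /= tr_scalar_mx Msym.
have := symmetric_psd Mlsym _ x.
rewrite mulmxBl mul_scalar_mx innerBr innerZr subr_ge0; apply.
move=> a /eigenvalueP[v va v0]; rewrite -(lerD2r lmin) add0r.
apply/(proj2 Mmin)/eigenvalueP; exists v => //.
by rewrite scalerDl -va mulmxBr mul_mx_scalar subrK.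
Qed.

Lemma lambda_min_gt0 : 0 < lmin.
Proof.
have /eigenvalueP[v vl v0] := proj1 Mmin.
have vT0 : v^T != 0 by rewrite trmx_eq0.
have MvT : M *m v^T = lmin *: v^T by rewrite -{1}Msym -trmx_mul vl linearZ.
by have := Mpd vT0; rewrite /innerM MvT innerZr pmulr_lgt0 // inner_gt0.
Qed.

Lemma normM_le_enorm (x : vec) : normM M x <= enorm x.
Proof. exact/ler_wsqrtr/innerM_le_inner. Qed.

Lemma enorm_mulmx_le_normM (x : vec) : enorm (M *m x) <= normM M x.
Proof.
have [->|Mx_gt0] := eqVneq (enorm (M *m x)) 0; first exact: normM_ge0.
have Mx_pos : 0 < enorm (M *m x) by rewrite lt_def Mx_gt0 enorm_ge0.
rewrite -(ler_pM2r Mx_pos) -expr2 [X in X <= _]sqr_sqrtr ?inner_ge0 //.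
have -> : inner (M *m x) (M *m x) = innerM M x (M *m x) by rewrite /innerM [RHS]inner_mulmxr Msym.
apply: le_trans (innerM_le_normM Msym Mpd _ _) _.
by rewrite ler_wpM2l ?normM_ge0 // normM_le_enorm.
Qed.

(* Weaker than the sharp bound with [Num.sqrt lmin], but this is the form in which the
   radius [r] of the theorem is stated. *)
Lemma enorm_le_normM (x : vec) : enorm x <= normM M x / lmin.
Proof.
have l0 := lambda_min_gt0; have l1 : lmin <= 1 := proj2 Mmax _ (proj1 Mmin).
rewrite ler_pdivlMr // [X in _ * X](_ : lmin = Num.sqrt (lmin ^+ 2)).
  rewrite /enorm /normM -sqrtrM ?inner_ge0 //; apply: ler_wsqrtr.
  have := lambda_min_le_innerM x; rewrite /innerM.
  have : 0 <= inner x x * lmin * (1 - lmin) by rewrite !mulr_ge0 ?inner_ge0 ?subr_ge0 ?(ltW l0).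
  nra.
by rewrite sqrtr_sqr ger0_norm // ltW.
Qed.

End Spectrum.

Section Distance.
Variables (R : realType) (n : nat) (M : 'M[R]_n) (D : set 'cV[R]_n).
Hypotheses (Msym : self_adjoint M) (Mpd : pos_def M) (D0 : D !=set0).
Local Notation vec := 'cV[R]_n.

Lemma distM_le_normM (z d : vec) : D d -> distM M z D <= normM M (d - z).
Proof.
move=> Dd; apply: ge_inf; last by exists d.
by exists 0 => _ [y _ <-]; apply: normM_ge0.
Qed.

Lemma le_distM c (z : vec) : (forall d, D d -> c <= normM M (d - z)) -> c <= distM M z D.
Proof.
move=> c_le; apply: lb_le_inf => [|_ [d Dd <-]]; last exact: c_le.
by have [d Dd] := D0; exists (normM M (d - z)), d.
Qed.

Lemma distM_ge0 (z : vec) : 0 <= distM M z D.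
Proof. by apply: le_distM => d _; apply: normM_ge0. Qed.

Lemma distM_sqr_le (z d : vec) : D d -> distM M z D ^+ 2 <= normM M (d - z) ^+ 2.
Proof.
by move=> Dd; rewrite ler_pXn2r ?nnegrE ?distM_ge0 ?normM_ge0 ?distM_le_normM.
Qed.

Lemma le_distM_sqr a b c (z : vec) : 0 <= b ->
  (forall d, D d -> c <= a + b * normM M (d - z) ^+ 2) -> c <= a + b * distM M z D ^+ 2.
Proof.
move=> b0 c_le; have [ca|ac] := lerP c a.
  by rewrite -[c]addr0 lerD // mulr_ge0 ?sqr_ge0.
have b_gt0 : 0 < b.
  rewrite lt_def b0 andbT; apply: contraTneq ac => b_eq0.
  by have [d /c_le] := D0; rewrite b_eq0 mul0r addr0 leNgt.
set m := Num.sqrt ((c - a) / b).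
have m_sqr : m ^+ 2 = (c - a) / b by rewrite sqr_sqrtr // divr_ge0 // subr_ge0 ltW.
have m_le : m <= distM M z D.
  apply: le_distM => d Dd.
  rewrite -(ler_pXn2r (_ : (0 < 2)%N)) ?nnegrE ?sqrtr_ge0 ?normM_ge0 // m_sqr.
  by rewrite ler_pdivrMr // mulrC lerBlDl c_le.
rewrite -lerBlDl -ler_pdivrMl // mulrC -m_sqr.
by rewrite ler_pXn2r ?nnegrE ?sqrtr_ge0 ?distM_ge0.
Qed.

Lemma distM_le_add (z z' : vec) : distM M z' D <= distM M z D + normM M (z' - z).
Proof.
rewrite -lerBlDr; apply: le_distM => d Dd; rewrite lerBlDr.
apply: le_trans (distM_le_normM z' Dd) _.
have -> : d - z' = (d - z) + (z - z') by rewrite addrA subrK.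
by apply: le_trans (normM_triangle Msym Mpd _ _) _; rewrite (normMB Msym z).
Qed.

Lemma distM_le_dist (z : vec) : is_lambda_max M 1 -> distM M z D <= dist z D.
Proof.
move=> Mmax; apply: lb_le_inf => [|_ [d Dd <-]].
  by have [d Dd] := D0; exists (enorm (d - z)), d.
exact: le_trans (distM_le_normM z Dd) (normM_le_enorm Msym Mmax _).
Qed.

Lemma distM_sqr_convex g (x y : vec) : 0 <= g <= 1 ->
  (forall d1 d2, D d1 -> D d2 -> D ((1 - g) *: d1 + g *: d2)) ->
  distM M ((1 - g) *: x + g *: y) D ^+ 2 <= (1 - g) * distM M x D ^+ 2 + g * distM M y D ^+ 2.
Proof.
move=> /andP[g0 g1] Dconv.
apply: le_distM_sqr => // d2 Dd2.
rewrite [leRHS]addrC; apply: le_distM_sqr => [|d1 Dd1]; first by rewrite subr_ge0.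
apply: le_trans (distM_sqr_le _ (Dconv _ _ Dd1 Dd2)) _.
have -> : (1 - g) *: d1 + g *: d2 - ((1 - g) *: x + g *: y) = (1 - g) *: (d1 - x) + g *: (d2 - y).
  by apply/matrixP => i j; rewrite !mxE; ring.
by rewrite [leRHS]addrC normM_sqr_convex // g0.
Qed.

End Distance.

Lemma zeros_convex (R : realType) n (T : 'cV[R]_n -> 'cV[R]_n -> Prop) g y1 y2 :
  maximal_monotone T -> 0 <= g <= 1 -> zeros T y1 -> zeros T y2 ->
  zeros T ((1 - g) *: y1 + g *: y2).
Proof.
move=> [Tmono Tmax] /andP[g0 g1] Ty1 Ty2; set y := _ + _.
have y_mono x u : T x u -> 0 <= inner (x - y) u.
  move=> Txu; have := Tmono _ _ _ _ Txu Ty1; have := Tmono _ _ _ _ Txu Ty2.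
  have -> : x - y = (1 - g) *: (x - y1) + g *: (x - y2).
    by apply/matrixP => i j; rewrite !mxE; ring.
  rewrite !subr0 => h2 h1; rewrite innerDl !innerZl.
  by rewrite addr_ge0 // mulr_ge0 // subr_ge0.
apply: (Tmax (fun x u => T x u \/ x = y /\ u = 0)); last by right.
- move=> x1 x2 u1 u2 [T1|[-> ->]] [T2|[-> ->]].
  + exact: Tmono.
  + by rewrite subr0; apply: y_mono.
  + by rewrite sub0r -opprB innerNN y_mono.
  + by rewrite subrr /inner trmx0 mul0mx mxE.
- by move=> x u Txu; left.
Qed.

Lemma self_adjoint_pos_def_unit (R : realType) n (M : 'M[R]_n) :
  self_adjoint M -> pos_def M -> M \in unitmx.
Proof.
move=> Msym Mpd; rewrite -row_free_unit -kermx_eq0; apply/eqP/row_matrixP => i.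
rewrite row0; set v := row i (kermx M).
have vM0 : v *m M = 0 by apply/sub_kermxP; rewrite row_sub.
apply/eqP; apply: contraT => v0.
have := @Mpd v^T; rewrite trmx_eq0 => /(_ v0).
by rewrite /innerM -{1}Msym -trmx_mul vM0 trmx0 /inner mulmx0 mxE ltxx.
Qed.

Section Rates.
Variable R : realType.
Implicit Types g al d : R.

Definition relax_coef g : R := Num.min g (2 * g - g ^+ 2).

Definition exact_rate g al : R := Num.sqrt (1 - relax_coef g * al ^+ 2 / (al ^+ 2 + 1)).

Definition error_rate g d : R := g * d / (1 - d).

Lemma relax_coef_small g : 0 <= g <= 1 -> relax_coef g = g.
Proof. by move=> /andP[g0 g1]; rewrite /relax_coef min_l //; nra. Qed.

Lemma relax_coef_large g : 1 <= g -> relax_coef g = 2 * g - g ^+ 2.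
Proof. by move=> g1; rewrite /relax_coef min_r //; nra. Qed.

Lemma relax_coef_ge0 g : 0 <= g <= 2 -> 0 <= relax_coef g.
Proof. by move=> /andP[g0 g2]; rewrite le_min g0 /=; nra. Qed.

Lemma relax_coef_le1 g : relax_coef g <= 1.
Proof. by rewrite ge_min; apply/orP; right; have := sqr_ge0 (g - 1); nra. Qed.

Lemma error_rate_ge0 g d : 0 <= g -> 0 <= d < 1 -> 0 <= error_rate g d.
Proof. by move=> g0 /andP[d0 d1]; rewrite divr_ge0 ?mulr_ge0 // subr_ge0 ltW. Qed.

Lemma exact_rate_sqr g al : 0 <= g <= 2 ->
  exact_rate g al ^+ 2 = 1 - relax_coef g * al ^+ 2 / (al ^+ 2 + 1).
Proof.
move=> g02; have al1 : 0 < al ^+ 2 + 1 by rewrite ltr_wpDl ?sqr_ge0.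
have t1 : al ^+ 2 / (al ^+ 2 + 1) <= 1 by rewrite ler_pdivrMr // mul1r lerDl.
have t0 : 0 <= al ^+ 2 / (al ^+ 2 + 1) by rewrite divr_ge0 ?sqr_ge0 ?ltW.
rewrite /exact_rate sqr_sqrtr // -mulrA subr_ge0.
by rewrite mulr_ile1 ?relax_coef_ge0 ?relax_coef_le1.
Qed.

(* [D2], [a2], [P2] stand for dist_M(z)^2, |z - p|_M^2 and dist_M(p)^2, where p is the
   resolvent point of z. *)
Lemma relaxation_bound g al D2 a2 P2 X : 0 <= g <= 2 -> 0 <= P2 ->
  a2 + P2 <= D2 -> al ^+ 2 * P2 <= a2 ->
  (g <= 1 -> X <= (1 - g) * D2 + g * P2) -> (1 <= g -> X <= (g - 1) ^+ 2 * a2 + P2) ->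
  X <= (1 - relax_coef g * al ^+ 2 / (al ^+ 2 + 1)) * D2.
Proof.
move=> /andP[g0 g2] P0 aPD aP X_small X_large.
have al1 : 0 < al ^+ 2 + 1 by rewrite ltr_wpDl ?sqr_ge0.
set u := (al ^+ 2 + 1)^-1.
have al_u : al ^+ 2 * u = 1 - u by rewrite /u; field; rewrite gt_eqF.
have P_u : P2 <= u * D2 by rewrite ler_pdivlMl //; lra.
rewrite -mulrA al_u.
have [g1|g1] := lerP g 1.
  have -> : relax_coef g = g by apply: relax_coef_small; rewrite g0.
  have := X_small g1.
  have : g * (P2 - u * D2) <= 0 by rewrite mulr_ge0_le0 // subr_le0.
  nra.
have -> : relax_coef g = 2 * g - g ^+ 2 by apply/relax_coef_large/ltW.
have := X_large (ltW g1).
have : (g - 1) ^+ 2 * (a2 - (D2 - P2)) <= 0 by rewrite mulr_ge0_le0 ?sqr_ge0 //; lra.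
have : (2 * g - g ^+ 2) * (P2 - u * D2) <= 0 by rewrite mulr_ge0_le0 //; nra.
nra.
Qed.

End Rates.

Section Resolvent.
Variables (R : realType) (n : nat) (T : 'cV[R]_n -> 'cV[R]_n -> Prop) (M : 'M[R]_n).
Hypotheses (Tmax : maximal_monotone T) (Msym : self_adjoint M) (Mpd : pos_def M).
Local Notation vec := 'cV[R]_n.
Local Notation Omega := (zeros T).

Lemma resolvent_ptP s (z p : vec) :
  resolvent_pt T M s z p -> exists2 u, T p u & M *m (z - p) = s *: u.
Proof.
move=> [u [Tpu ->]]; exists u => //.
by rewrite addrC addKr -scalemxAr mulKVmx // self_adjoint_pos_def_unit.
Qed.

Lemma resolvent_innerM_ge0 s (z p y : vec) : 0 <= s -> resolvent_pt T M s z p -> Omega y ->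
  0 <= innerM M (z - p) (p - y).
Proof.
move=> s0 /resolvent_ptP[u Tpu Mzp] Oy.
have := proj1 Tmax _ _ _ _ Tpu Oy; rewrite subr0 => pu_ge0.
by rewrite innerMC // /innerM Mzp innerZr mulr_ge0.
Qed.

Lemma resolvent_fejer s (z p y : vec) : 0 <= s -> resolvent_pt T M s z p -> Omega y ->
  normM M (z - p) ^+ 2 + normM M (p - y) ^+ 2 <= normM M (z - y) ^+ 2.
Proof.
move=> s0 zp Oy; have := resolvent_innerM_ge0 s0 zp Oy.
have -> : z - y = (z - p) + (p - y) by rewrite addrA subrK.
rewrite (normM_sqrD Msym Mpd (z - p)); lra.
Qed.

Lemma relaxed_resolvent_fejer g s (z p y : vec) : 0 <= g <= 2 -> 0 <= s ->
  resolvent_pt T M s z p -> Omega y ->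
  normM M (g *: p + (1 - g) *: z - y) <= normM M (z - y).
Proof.
move=> /andP[g0 g2] s0 zp Oy; have := resolvent_innerM_ge0 s0 zp Oy.
have -> : g *: p + (1 - g) *: z - y = (1 - g) *: (z - p) + (p - y).
  by apply/matrixP => i j; rewrite !mxE; ring.
have -> : z - y = (z - p) + (p - y) by rewrite addrA subrK.
rewrite normM_le_sqr (normM_sqrD Msym Mpd (_ *: _)) (normM_sqrD Msym Mpd (z - p)).
rewrite normMZ // exprMn real_normK ?num_real // innerMZl //.
have := sqr_ge0 (normM M (z - p)).
have : 0 <= g * (2 - g) by rewrite mulr_ge0 // subr_ge0.
nra.
Qed.

Hypothesis Omega0 : Omega !=set0.

Lemma distM_resolvent_fejer s (z p : vec) : 0 <= s -> resolvent_pt T M s z p ->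
  normM M (z - p) ^+ 2 + distM M p Omega ^+ 2 <= distM M z Omega ^+ 2.
Proof.
move=> s0 zp; rewrite -[leRHS]mul1r -[leRHS]add0r.
apply: le_distM_sqr => // y Oy; rewrite add0r mul1r (normMB Msym y).
apply: le_trans _ (resolvent_fejer s0 zp Oy); rewrite lerD2l (normMB Msym p).
exact (distM_sqr_le M Omega0 p Oy).
Qed.

Lemma distM_overrelaxed_resolvent g s (z p : vec) : 1 <= g -> 0 <= s ->
  resolvent_pt T M s z p ->
  distM M (g *: p + (1 - g) *: z) Omega ^+ 2 <=
    (g - 1) ^+ 2 * normM M (z - p) ^+ 2 + distM M p Omega ^+ 2.
Proof.
move=> g1 s0 zp; rewrite -[X in _ <= _ + X]mul1r.
apply: le_distM_sqr => // y Oy; rewrite mul1r.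
apply: le_trans (distM_sqr_le M Omega0 _ Oy) _; have := resolvent_innerM_ge0 s0 zp Oy.
have -> : y - (g *: p + (1 - g) *: z) = - ((1 - g) *: (z - p) + (p - y)).
  by apply/matrixP => i j; rewrite !mxE; ring.
rewrite normMN // (normM_sqrD Msym Mpd (_ *: _)) normMZ // exprMn real_normK ?num_real //.
rewrite innerMZl // (normMB Msym p) -[(1 - g) ^+ 2]sqrrN opprB; nra.
Qed.

Lemma distM_relaxed_resolvent_le g al s (z p : vec) : 0 <= g <= 2 -> 0 <= al -> 0 <= s ->
  resolvent_pt T M s z p -> al * distM M p Omega <= normM M (z - p) ->
  distM M (g *: p + (1 - g) *: z) Omega <= exact_rate g al * distM M z Omega.
Proof.
move=> /andP[g0 g2] al0 s0 zp pz_le.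
have small : g <= 1 -> distM M (g *: p + (1 - g) *: z) Omega ^+ 2 <=
    (1 - g) * distM M z Omega ^+ 2 + g * distM M p Omega ^+ 2.
  move=> g1; rewrite [g *: p + _]addrC; apply: (distM_sqr_convex Msym Mpd Omega0) => [|d1 d2 Od1 Od2].
    by rewrite g0.
  by apply: zeros_convex; rewrite ?g0.
rewrite -(ler_pXn2r (_ : (0 < 2)%N)) ?nnegrE ?mulr_ge0 ?distM_ge0 ?sqrtr_ge0 //.
rewrite exprMn exact_rate_sqr ?g0 //.
apply: relaxation_bound (distM_resolvent_fejer s0 zp) _ small _.
- by rewrite g0.
- exact: sqr_ge0.
- by rewrite -exprMn ler_pXn2r ?nnegrE ?mulr_ge0 ?distM_ge0 ?normM_ge0.
- by move=> g1; apply: distM_overrelaxed_resolvent g1 s0 zp.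
Qed.

End Resolvent.

Lemma exact_rate_ge (R : realType) (g al : R) : 0 <= g <= 2 -> g - 1 <= exact_rate g al.
Proof.
move=> g02; have [g1|g1] := lerP g 1; first by apply: le_trans (sqrtr_ge0 _); rewrite subr_le0.
rewrite -(ler_pXn2r (_ : (0 < 2)%N)) ?nnegrE ?sqrtr_ge0 ?subr_ge0 ?(ltW g1) //.
rewrite exact_rate_sqr // (relax_coef_large (ltW g1)) -mulrA.
have al1 : 0 < al ^+ 2 + 1 by rewrite ltr_wpDl ?sqr_ge0.
have t1 : al ^+ 2 / (al ^+ 2 + 1) <= 1 by rewrite ler_pdivrMr // mul1r lerDl.
have C0 : 0 <= 2 * g - g ^+ 2 by case/andP: g02; nra.
have : 0 <= (2 * g - g ^+ 2) * (1 - al ^+ 2 / (al ^+ 2 + 1)) by apply: mulr_ge0; rewrite // subr_ge0.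
nra.
Qed.

Lemma exact_error_rate_le_rate (R : realType) (g d al : R) : 0 <= g <= 2 -> 0 <= d < 1 ->
  exact_rate g al + error_rate g d <= rate g d al.
Proof.
move=> g02 /andP[d0 d1].
rewrite /rate -/(relax_coef g) -/(exact_rate g al) /error_rate div1r.
set q := exact_rate g al; set m := _ / Num.sqrt _; set u := (1 - d)^-1.
have q_ge : g - 1 <= q := exact_rate_ge al g02.
have m0 : 0 <= m by case/andP: g02 => g0 _; rewrite divr_ge0 ?sqrtr_ge0 // le_min g0 ler01.
have du : (1 - d) * u = 1 by rewrite mulfV // subr_eq0 gt_eqF.
have u0 : 0 < u by rewrite invr_gt0 subr_gt0.
have : 0 <= u * d * (q + m + 1 - g) by apply: mulr_ge0; [rewrite mulr_ge0 // ltW | lra].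
have : q = (1 - d) * u * q by rewrite du mul1r.
nra.
Qed.

Section IGPPAStep.
Variables (R : realType) (n : nat) (T : 'cV[R]_n -> 'cV[R]_n -> Prop) (M : 'M[R]_n).
Hypotheses (Tmax : maximal_monotone T) (Omega0 : zeros T !=set0).
Hypotheses (Msym : self_adjoint M) (Mpd : pos_def M) (Mmax : is_lambda_max M 1).
Local Notation vec := 'cV[R]_n.
Local Notation Omega := (zeros T).

Lemma subregular_resolvent_distM r kappa al s (z p : vec) :
  subregular_on T r kappa -> 0 <= kappa -> 0 <= al -> kappa * al <= s ->
  resolvent_pt T M s z p -> enorm p <= r ->
  al * distM M p Omega <= normM M (z - p).
Proof.
move=> sub k0 al0 kal_s /(resolvent_ptP Msym Mpd)[u Tpu Mzp] pr.
have s0 : 0 <= s by apply: le_trans kal_s; rewrite mulr_ge0.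
have su : s * enorm u <= normM M (z - p).
  by rewrite -[s]ger0_norm // -enormZ -Mzp enorm_mulmx_le_normM.
have p_dist : distM M p Omega <= kappa * enorm u.
  exact: le_trans (distM_le_dist Msym Omega0 p Mmax) (sub p pr u Tpu).
apply: le_trans su; apply: le_trans (ler_wpM2l al0 p_dist) _.
by rewrite mulrA [al * kappa]mulrC ler_wpM2r ?enorm_ge0.
Qed.

Lemma IGPPA_inexact_error g d (z p w : vec) : 0 <= g -> 0 <= d < 1 ->
  normM M (w - p) <= d * normM M (w - z) ->
  normM M ((g *: w + (1 - g) *: z) - (g *: p + (1 - g) *: z)) <= error_rate g d * normM M (z - p).
Proof.
move=> g0 /andP[d0 d1] wp_le.
have -> : (g *: w + (1 - g) *: z) - (g *: p + (1 - g) *: z) = g *: (w - p).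
  by apply/matrixP => i j; rewrite !mxE; ring.
have wz_le : normM M (w - z) <= normM M (w - p) + normM M (z - p).
  have -> : w - z = (w - p) + (p - z) by rewrite addrA subrK.
  by apply: le_trans (normM_triangle Msym Mpd _ _) _; rewrite (normMB Msym p).
rewrite normMZ // ger0_norm // /error_rate -!mulrA ler_wpM2l // mulrCA ler_pdivlMl ?subr_gt0 //.
by have := ler_wpM2l d0 wz_le; lra.
Qed.

Lemma IGPPAstep_distM_le r kappa g d al s e (z zp : vec) :
  0 <= g <= 2 -> 0 <= d < 1 -> subregular_on T r kappa -> 0 <= kappa -> 0 <= al ->
  kappa * al <= s -> (forall p, resolvent_pt T M s z p -> enorm p <= r) ->
  IGPPAstep_out T z s e d g M zp ->
  distM M zp Omega <= (exact_rate g al + error_rate g d) * distM M z Omega.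
Proof.
move=> g02 d01 sub k0 al0 kal_s p_le_r [w [p [zp_res [wp_le ->]]]].
have s0 : 0 <= s by apply: le_trans kal_s; rewrite mulr_ge0.
have pz_le := subregular_resolvent_distM sub k0 al0 kal_s zp_res (p_le_r p zp_res).
have zp_le_dist : normM M (z - p) <= distM M z Omega.
  rewrite -(ler_pXn2r (_ : (0 < 2)%N)) ?nnegrE ?normM_ge0 ?distM_ge0 //.
  apply: le_trans (distM_resolvent_fejer Tmax Msym Mpd Omega0 s0 zp_res).
  by rewrite lerDl sqr_ge0.
move: wp_le; rewrite le_min => /andP[_ wp_le].
apply: le_trans (distM_le_add Msym Mpd Omega0 (g *: p + (1 - g) *: z) _) _.
have g0 : 0 <= g by case/andP: g02.
rewrite mulrDl; apply: lerD.
  exact (distM_relaxed_resolvent_le Tmax Msym Mpd Omega0 g02 al0 s0 zp_res pz_le).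
apply: le_trans (IGPPA_inexact_error g0 d01 wp_le) _.
by rewrite ler_wpM2l // error_rate_ge0.
Qed.

Lemma IGPPAstep_fejer g d s e (z zp y : vec) : 0 <= g <= 2 -> 0 <= s -> Omega y ->
  IGPPAstep_out T z s e d g M zp -> normM M (zp - y) <= normM M (z - y) + g * e.
Proof.
move=> g02 s0 Oy [w [p [zp_res [wp_le ->]]]].
have -> : g *: w + (1 - g) *: z - y = (g *: p + (1 - g) *: z - y) + g *: (w - p).
  by apply/matrixP => i j; rewrite !mxE; ring.
apply: le_trans (normM_triangle Msym Mpd _ _) _.
rewrite lerD ?(relaxed_resolvent_fejer Tmax Msym Mpd g02 s0 zp_res Oy) //.
move: wp_le; rewrite le_min => /andP[wp_le _].
by rewrite normMZ // ger0_norm ?ler_wpM2l //; case/andP: g02.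
Qed.

End IGPPAStep.

Lemma resolvent_enorm_le (R : realType) n (T : 'cV[R]_n -> 'cV[R]_n -> Prop) (M : 'M[R]_n)
    lmin s (z p y : 'cV[R]_n) :
  maximal_monotone T -> self_adjoint M -> pos_def M -> is_lambda_max M 1 ->
  is_lambda_min M lmin -> 0 <= s -> resolvent_pt T M s z p -> zeros T y ->
  enorm p <= enorm y + normM M (z - y) / lmin.
Proof.
move=> Tmax Msym Mpd Mmax Mmin s0 zp Oy.
have py_le : normM M (p - y) <= normM M (z - y).
  rewrite normM_le_sqr //; apply: le_trans (resolvent_fejer Tmax Msym Mpd s0 zp Oy).
  by rewrite lerDr sqr_ge0.
have -> : p = y + (p - y) by rewrite addrC subrK.
apply: le_trans (enorm_triangle _ _) _; rewrite lerD2l.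
apply: le_trans (enorm_le_normM Msym Mpd Mmax Mmin _) _.
by rewrite ler_wpM2r // invr_ge0 ltW // (lambda_min_gt0 Msym Mpd Mmin).
Qed.

Lemma series_le_limn (R : realType) (u : nat -> R) :
  (forall k, 0 <= u k) -> cvgn (series u) -> forall k, series u k <= limn (series u).
Proof.
move=> u0 u_cvg; apply: nondecreasing_cvgn_le u_cvg; apply/nondecreasing_seqP => k.
by rewrite seriesSr lerDl.
Qed.

Section Iterates.
Variables (R : realType) (n : nat) (T : 'cV[R]_n -> 'cV[R]_n -> Prop) (M : 'M[R]_n).
Variables (z : nat -> 'cV[R]_n) (sigma eta : nat -> R) (g d : R).
Hypotheses (Tmax : maximal_monotone T) (Msym : self_adjoint M) (Mpd : pos_def M).
Hypotheses (g02 : 0 <= g <= 2) (sigma0 : forall k, 0 <= sigma k).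
Hypothesis step : forall k, IGPPAstep_out T (z k) (sigma k) (eta k) d g M (z k.+1).

Lemma IGPPA_fejer_series y : zeros T y ->
  forall k, normM M (z k - y) <= normM M (z 0%N - y) + g * series eta k.
Proof.
move=> Oy; elim=> [|k IH]; first by rewrite /series /= big_geq // mulr0 addr0.
apply: le_trans (IGPPAstep_fejer Tmax Msym Mpd g02 (sigma0 k) Oy (step k)) _.
by rewrite seriesSr mulrDr addrA lerD2r.
Qed.

Lemma IGPPA_resolvent_enorm_le lmin y k p :
  is_lambda_max M 1 -> is_lambda_min M lmin ->
  (forall k, 0 <= eta k) -> cvgn (series eta) -> zeros T y ->
  resolvent_pt T M (sigma k) (z k) p ->
  enorm p <= enorm y + (normM M (z 0%N - y) + g * limn (series eta)) / lmin.
Proof.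
move=> Mmax Mmin eta0 eta_cvg Oy zp.
apply: le_trans (resolvent_enorm_le Tmax Msym Mpd Mmax Mmin (sigma0 k) zp Oy) _.
rewrite lerD2l ler_wpM2r ?invr_ge0 ?(ltW (lambda_min_gt0 Msym Mpd Mmin)) //.
apply: le_trans (IGPPA_fejer_series Oy k) _; rewrite lerD2l ler_wpM2l //.
  by case/andP: g02.
exact (series_le_limn eta0 eta_cvg k).
Qed.

End Iterates.

Theorem corollary1 (R : realType) (n : nat)
  (T : 'cV[R]_n -> 'cV[R]_n -> Prop) (M : 'M[R]_n)
  (z : nat -> 'cV[R]_n) (sigma eta : nat -> R)
  (gamma delta lmin r kappa alpha : R) (zbar0 : 'cV[R]_n) :
  maximal_monotone T ->
  zeros T !=set0 ->
  self_adjoint M -> pos_def M -> is_lambda_max M 1 ->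
  is_lambda_min M lmin ->
  0 < gamma < 2 ->
  0 <= delta < 1 / 2 ->
  (forall k, 0 <= sigma k) -> (forall k, 0 <= eta k) ->
  cvgn (series eta) ->
  (exists c, 0 < c /\ forall k, c <= sigma k) ->
  (forall k, IGPPAstep_out T (z k) (sigma k) (eta k) delta gamma M (z k.+1)) ->
  bounded_metric_subregular T ->
  zeros T zbar0 ->
  (forall d, zeros T d -> normM M (zbar0 - z 0%N) <= normM M (d - z 0%N)) ->
  enorm zbar0 + (1 / lmin) * (distM M (z 0%N) (zeros T) + gamma * limn (series eta)) <= r ->
  0 < kappa -> subregular_on T r kappa ->
  0 < alpha -> rate gamma delta alpha < 1 ->
  (forall k, kappa * alpha <= sigma k) ->
  forall k, distM M (z k) (zeros T) <= rate gamma delta alpha ^+ k * distM M (z 0%N) (zeros T).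
Proof.
move=> Tmax Omega0 Msym Mpd Mmax Mmin /andP[g0 g2] /andP[d0 d12] sigma0 eta0 eta_cvg _ step _
  Ozb0 zb0_min r_ge kappa0 sub alpha0 _ kal_sigma.
have g02 : 0 <= gamma <= 2 by rewrite !ltW.
have d01 : 0 <= delta < 1 by rewrite d0 (lt_le_trans d12) // ler_pdivrMr // mul1r ler1n.
have p_le_r k p : resolvent_pt T M (sigma k) (z k) p -> enorm p <= r.
  move=> zp; apply: le_trans r_ge.
  apply: le_trans (IGPPA_resolvent_enorm_le Tmax Msym Mpd g02 sigma0 step Mmax Mmin eta0 eta_cvg Ozb0 zp) _.
  rewrite lerD2l div1r [leRHS]mulrC ler_wpM2r ?invr_ge0 ?(ltW (lambda_min_gt0 Msym Mpd Mmin)) //.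
  by rewrite lerD2r (normMB Msym); apply: le_distM => // y /zb0_min.
have rate_ge : exact_rate gamma alpha + error_rate gamma delta <= rate gamma delta alpha.
  exact: exact_error_rate_le_rate.
have rate0 : 0 <= rate gamma delta alpha.
  by apply: le_trans rate_ge; rewrite addr_ge0 ?sqrtr_ge0 ?error_rate_ge0 ?(ltW g0).
have contract k : distM M (z k.+1) (zeros T) <= rate gamma delta alpha * distM M (z k) (zeros T).
  apply: le_trans (IGPPAstep_distM_le Tmax Omega0 Msym Mpd Mmax g02 d01 sub (ltW kappa0)
    (ltW alpha0) (kal_sigma k) (p_le_r k) (step k)) _.
  by rewrite ler_wpM2r ?distM_ge0.
elim=> [|k IH]; first by rewrite expr0 mul1r.
by apply: le_trans (contract k) _; rewrite exprS -mulrA ler_wpM2l.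
Qed.
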